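(* Let $\mathcal{X}$, $\mathcal{Y}$ be finite sets, $\mathcal{H}_S$ a finite-dimensional Hilbert space, and $\{\mathcal{N}^{y|x}\}_{x\in\mathcal{X},y\in\mathcal{Y}}$ an indecomposable CC-QSC acting on $\mathcal{H}_S$. Let $Q$ be a probability mass function on $\mathcal{X}$. For an initial density operator $\rho_{S_0}\in\mathfrak{D}(\mathcal{H}_S)$ and $n\ge1$, let $(X_1^n,Y_1^n)$ be random sequences on $\mathcal{X}^n\times\mathcal{Y}^n$ with joint pmf \[ P(\mathbf{x}_1^n,\mathbf{y}_1^n)=\prod_{\ell=1}^n Q(x_\ell)\cdot\operatorname{tr}\big(\mathcal{N}^{y_n|x_n}\circ\cdots\circ\mathcal{N}^{y_1|x_1}(\rho_{S_0})\big), \] and define $\mathrm{I}^{(n)}(Q,\{\mathcal{N}^{y|x}\},\rho_{S_0})\triangleq\frac1n \mathbf{I}(X_1^n;Y_1^n)$, the (classical) mutual information under this joint pmf, divided by $n$. Then for any $\alpha_{S_0},\beta_{S_0}\in\mathfrak{D}(\mathcal{H}_S)$, \[ \mathrm{I}^{(n)}(Q,\{\mathcal{N}^{y|x}\},\alpha_{S_0})-\mathrm{I}^{(n)}(Q,\{\mathcal{N}^{y|x}\},\beta_{S_0})\xrightarrow{n\to\infty}0 . \]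
   Context: $\mathfrak{D}(\mathcal{H})$ denotes the set of density operators on $\mathcal{H}$. A (classical-input classical-output) quantum-state channel (CC-QSC) is a finitely indexed family $\{\mathcal{N}^{y|x}\}_{x\in\mathcal{X},y\in\mathcal{Y}}$ of completely positive maps, all acting on operators on the same Hilbert space $\mathcal{H}_S$, such that $\sum_{y\in\mathcal{Y}}\mathcal{N}^{y|x}$ is trace-preserving for each $x\in\mathcal{X}$. A CC-QSC is called indecomposable if for any initial density operators $\alpha_{S_0},\beta_{S_0}$ and any $\varepsilon>0$ there exists a positive integer $N$ such that $\|\alpha_{S_n}^{(\mathbf{x}_1^n)}-\beta_{S_n}^{(\mathbf{x}_1^n)}\|_1<\varepsilon$ for all $n\ge N$ and all $\mathbf{x}_1^n\in\mathcal{X}^n$, where $\alpha_{S_n}^{(\mathbf{x}_1^n)}\triangleq\sum_{\mathbf{y}_1^n\in\mathcal{Y}^n}\mathcal{N}^{y_n|x_n}\circ\cdots\circ\mathcal{N}^{y_1|x_1}(\alpha_{S_0})$, similarly for $\beta$, and $\|A\|_1\triangleq\frac12\operatorname{tr}\sqrt{A^\dagger A}$ is the trace distance. *)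

From HB Require Import structures.
From mathcomp Require Import all_boot all_order all_algebra.
From mathcomp Require Import complex.
From mathcomp Require Import boolp classical_sets reals exp topology normedtype sequences.

Set Implicit Arguments.
Unset Strict Implicit.
Unset Printing Implicit Defensive.

Import Order.TTheory GRing.Theory Num.Theory numFieldNormedType.Exports.
Local Open Scope ring_scope.
Local Open Scope sesquilinear_scope.

Section QuantumDefs.
Variable R : realType.
Local Notation C := (R[i]).

(* positive semidefinite matrix: v^dagger A v >= 0 for every vector v
   (in the order of the complex numbers, 0 <= z means z is real and >= 0) *)
Definition psdmx m (A : 'M[C]_m) : Prop :=
  forall v : 'cV[C]_m, 0 <= (v ^t* *m A *m v) 0 0.

Definition density d (rho : 'M[C]_d) : Prop := psdmx rho /\ \tr rho = 1.

Definition mxsqrt d (P : 'M[C]_d) : 'M[C]_d :=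
  xget 0 [set Q : 'M[C]_d | psdmx Q /\ Q *m Q = P].

Definition trace_dist d (A : 'M[C]_d) : R :=
  complex.Re (\tr (mxsqrt (A ^t* *m A))) / 2.

(* complete positivity: for every k, id_k (x) N maps psd (k*d)x(k*d) block
   matrices to psd block matrices *)
Definition completely_positive d (N : 'M[C]_d -> 'M[C]_d) : Prop :=
  linear N /\
  forall (k : nat) (B : 'I_k -> 'I_k -> 'M[C]_d),
    psdmx (\mxblock_(i < k, j < k) B i j) ->
    psdmx (\mxblock_(i < k, j < k) N (B i j)).

Definition trace_preserving d (T : 'M[C]_d -> 'M[C]_d) : Prop :=
  forall A, \tr (T A) = \tr A.

(* a CC-QSC {N^{y|x}} ; N x y stands for N^{y|x} *)
Definition ccqsc (X Y : finType) d (N : X -> Y -> 'M[C]_d -> 'M[C]_d) : Prop :=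
  (forall x y, completely_positive (N x y)) /\
  (forall x, trace_preserving (fun A => \sum_(y : Y) N x y A)).

Definition evolve (X Y : finType) d (N : X -> Y -> 'M[C]_d -> 'M[C]_d)
  n (xs : n.-tuple X) (ys : n.-tuple Y) (rho : 'M[C]_d) : 'M[C]_d :=
  foldl (fun A (p : X * Y) => N p.1 p.2 A) rho (zip xs ys).

Definition state_n (X Y : finType) d (N : X -> Y -> 'M[C]_d -> 'M[C]_d)
  n (xs : n.-tuple X) (rho : 'M[C]_d) : 'M[C]_d :=
  \sum_(ys : n.-tuple Y) evolve N xs ys rho.

Definition indecomposable (X Y : finType) d
  (N : X -> Y -> 'M[C]_d -> 'M[C]_d) : Prop :=
  forall alpha beta : 'M[C]_d, density alpha -> density beta ->
  forall eps : R, 0 < eps -> exists N0 : nat, forall n : nat, (N0 <= n)%N ->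
  forall xs : n.-tuple X,
    trace_dist (state_n N xs alpha - state_n N xs beta) < eps.

Definition pmf (X : finType) (Q : X -> R) : Prop :=
  (forall x, 0 <= Q x) /\ \sum_(x : X) Q x = 1.

Definition mutual_info (A B : finType) (P : A -> B -> R) : R :=
  \sum_(a : A) \sum_(b : B)
    (if P a b == 0 then 0
     else P a b * ln (P a b / ((\sum_(b' : B) P a b') * (\sum_(a' : A) P a' b)))).

Definition joint_pmf (X Y : finType) d (N : X -> Y -> 'M[C]_d -> 'M[C]_d)
  (Q : X -> R) (rho : 'M[C]_d) n (xs : n.-tuple X) (ys : n.-tuple Y) : R :=
  (\prod_(l < n) Q (tnth xs l)) * complex.Re (\tr (evolve N xs ys rho)).

Definition In (X Y : finType) d (N : X -> Y -> 'M[C]_d -> 'M[C]_d)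
  (Q : X -> R) (rho : 'M[C]_d) (n : nat) : R :=
  n%:R^-1 * mutual_info (@joint_pmf X Y d N Q rho n).

End QuantumDefs.

From HB Require Import structures.
From mathcomp Require Import all_boot all_order all_algebra.
From mathcomp Require Import complex.
From mathcomp Require Import boolp classical_sets reals exp topology normedtype sequences.
From mathcomp Require Import ring lra.

Set Implicit Arguments.
Unset Strict Implicit.
Unset Printing Implicit Defensive.

Import Order.TTheory GRing.Theory Num.Theory numFieldNormedType.Exports.
Local Open Scope ring_scope.
Local Open Scope classical_set_scope.

(* Write I(X^n; Y^n) = sum_x Q^n(x) sum_y xlnx W(y|x) - sum_y xlnx P(y) with xlnx t = t ln t,
   and split n = k + m.  Summing out the first k outputs moves each of the two terms by at
   most k ln |Y| (the grouping bound H(T) <= H(S, T) <= H(T) + ln |S|), and afterwards both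
   terms depend on the initial state only through the states reached after k steps.  By
   indecomposability these are eps-close in trace distance for alpha and beta once k is
   large.  Through the Jordan decomposition of their difference, the output laws of the last
   m steps are then 2 eps-close in total variation, and a Fannes-type continuity bound for
   sum xlnx moves each term by at most 2 + eps m ln |Y|.  Hence
   |I^(n)(alpha) - I^(n)(beta)| <= 2 (k ln |Y| + 2) / n + 2 eps ln |Y|. *)

Lemma card_gt0_sumr_neq0 (V : nmodType) (I : finType) (F : I -> V) :
  \sum_i F i != 0 -> (0 < #|I|)%N.
Proof. by rewrite lt0n; apply: contraNneq => /card0_eq I0; rewrite big_pred0. Qed.

Section XLnX.
Variable R : realType.
Implicit Types (a b c x : R).

Definition xlnx x : R := x * ln x.

Lemma ln_ge_1subV x : 0 < x -> 1 - x^-1 <= ln x.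
Proof.
move=> x0; have xV0 : 0 < x^-1 by rewrite invr_gt0.
have := @le_ln1Dx R (x^-1 - 1); rewrite addrCA subrr addr0 lnV ?posrE //.
by move=> /(_ ltac:(lra)); lra.
Qed.

Lemma xlnx_ge_subr1 x : 0 <= x -> x - 1 <= xlnx x.
Proof.
rewrite le0r => /orP[/eqP->|x0]; first by rewrite /xlnx mul0r; lra.
have := ln_ge_1subV x0; rewrite -(ler_pM2l x0) mulrBr mulr1 mulfV ?gt_eqF //.
Qed.

Lemma xlnx_le_mul_ln a b : 0 <= a -> a <= b -> xlnx a <= a * ln b.
Proof.
rewrite le0r => /orP[/eqP->|a0] ab; first by rewrite /xlnx !mul0r.
by rewrite /xlnx ler_pM2l // ler_ln ?posrE //; lra.
Qed.

Lemma xlnx_superadditive a b : 0 <= a -> 0 <= b -> xlnx a + xlnx b <= xlnx (a + b).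
Proof. by move=> a0 b0; rewrite /xlnx mulrDl lerD // xlnx_le_mul_ln //; lra. Qed.

Lemma xlnx_addr_le a b : 0 <= a -> 0 <= b -> a + b <= 1 -> xlnx (a + b) <= xlnx a + b.
Proof.
move=> a0 b0 ab1; rewrite /xlnx mulrDl.
have : b * ln (a + b) <= 0 by rewrite mulr_ge0_le0 // ln_le0.
suff : a * ln (a + b) <= a * ln a + b by lra.
move: a0; rewrite le0r => /orP[/eqP->|a0]; first by rewrite !mul0r add0r.
have -> : a + b = a * (1 + b / a) by rewrite mulrDr mulr1 mulrCA divff ?gt_eqF ?mulr1.
have ba0 : 0 <= b / a by rewrite divr_ge0 // ltW.
rewrite lnM ?posrE //; last lra.
rewrite mulrDr lerD2l.
have {2}-> : b = a * (b / a) by rewrite mulrCA divff ?gt_eqF ?mulr1.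
by rewrite ler_pM2l // le_ln1Dx //; lra.
Qed.

Section Sums.
Variable I : finType.
Implicit Types p q : I -> R.

Lemma sum_xlnx_le p : (forall i, 0 <= p i) -> \sum_i xlnx (p i) <= xlnx (\sum_i p i).
Proof.
move=> p_ge0; rewrite /xlnx mulr_suml; apply: ler_sum => i _.
by apply: xlnx_le_mul_ln => //; rewrite (bigD1 i) //= lerDl sumr_ge0.
Qed.

(* Jensen's inequality for xlnx against the uniform distribution on [I]. *)
Lemma sum_xlnx_ge p : (forall i, 0 <= p i) ->
  xlnx (\sum_i p i) - (\sum_i p i) * ln #|I|%:R <= \sum_i xlnx (p i).
Proof.
move=> p_ge0; set S := \sum_i p i.
have : 0 <= S by rewrite sumr_ge0.
rewrite le0r => /orP[/eqP S0|S0].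
  rewrite S0 /xlnx !mul0r subr0; apply: sumr_ge0 => i _.
  move/eqP: S0; rewrite psumr_eq0 // => /allP/(_ i (mem_index_enum i))/implyP/(_ isT)/eqP->.
  by rewrite mul0r.
have K0 : 0 < #|I|%:R :> R by rewrite ltr0n (@card_gt0_sumr_neq0 _ _ p) // -/S gt_eqF.
have termwise i : p i - S / #|I|%:R <= xlnx (p i) - p i * (ln S - ln #|I|%:R).
  move: (p_ge0 i); rewrite le0r => /orP[/eqP->|pi0].
    by rewrite /xlnx !mul0r subr0 sub0r oppr_le0 divr_ge0 // ltW.
  have r0 : 0 < #|I|%:R * p i / S by rewrite divr_gt0 // mulr_gt0.
  have := ln_ge_1subV r0; rewrite -(ler_pM2l pi0).
  rewrite ln_div ?posrE ?mulr_gt0 // lnM ?posrE //.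
  have -> : p i * (1 - (#|I|%:R * p i / S)^-1) = p i - S / #|I|%:R.
    by field; rewrite !gt_eqF.
  by rewrite /xlnx; congr (_ <= _); ring.
have : \sum_i (p i - S / #|I|%:R) <= \sum_i (xlnx (p i) - p i * (ln S - ln #|I|%:R)).
  by apply: ler_sum => i _; exact: termwise.
rewrite !sumrB sumr_const -mulr_suml -/S (_ : #|_| = #|I|) //.
rewrite -[_ *+ #|I|]mulr_natr divfK ?gt_eqF //.
rewrite /xlnx; lra.
Qed.

Lemma sum_xlnx_diff_le p q eps :
  (forall i, 0 <= p i) -> (forall i, 0 <= q i) ->
  \sum_i p i = 1 -> \sum_i q i = 1 -> \sum_i `|p i - q i| <= eps *+ 2 ->
  \sum_i xlnx (q i) - \sum_i xlnx (p i) <= 2 + eps * ln #|I|%:R.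
Proof.
move=> p_ge0 q_ge0 p1 q1 pq_eps.
pose c i := Num.min (p i) (q i).
have c_ge0 i : 0 <= c i by rewrite le_min p_ge0 q_ge0.
have pc_ge0 i : 0 <= p i - c i by rewrite subr_ge0 ge_min lexx.
have qc_ge0 i : 0 <= q i - c i by rewrite subr_ge0 ge_min lexx orbT.
have norm_pq i : `|p i - q i| = (p i - c i) + (q i - c i).
  rewrite /c /=; have [pq|qp] := leP (p i) (q i).
    by rewrite ler0_norm ?subr_le0 //; ring.
  by rewrite gtr0_norm ?subr_gt0 //; ring.
set delta := \sum_i (p i - c i).
have q_delta : \sum_i (q i - c i) = delta by rewrite /delta !sumrB p1 q1.
have delta_ge0 : 0 <= delta by rewrite sumr_ge0.
have delta_le1 : delta <= 1.
  rewrite /delta sumrB p1; have : 0 <= \sum_i c i by rewrite sumr_ge0.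
  lra.
have delta_eps : delta <= eps.
  move: pq_eps; under eq_bigr => i _ do rewrite norm_pq.
  by rewrite big_split /= -/delta q_delta !mulr2n; lra.
(* Both [p] and [q] exceed [c = min p q] by a total mass [delta <= eps]; the [c] parts cancel. *)
have p_split : \sum_i xlnx (c i) + \sum_i xlnx (p i - c i) <= \sum_i xlnx (p i).
  rewrite -big_split /=; apply: ler_sum => i _.
  by have := xlnx_superadditive (c_ge0 i) (pc_ge0 i); rewrite addrCA subrr addr0.
have q_split : \sum_i xlnx (q i) <= \sum_i xlnx (c i) + delta.
  rewrite -q_delta -big_split /=; apply: ler_sum => i _.
  have := xlnx_addr_le (c_ge0 i) (qc_ge0 i); rewrite addrCA subrr addr0; apply.
  by rewrite -q1 (bigD1 i) //= lerDl sumr_ge0.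
have := sum_xlnx_ge pc_ge0; rewrite -/delta => delta_jensen.
have : -1 <= xlnx delta by have := xlnx_ge_subr1 delta_ge0; lra.
have : delta * ln #|I|%:R <= eps * ln #|I|%:R.
  by rewrite ler_wpM2r // ln_ge0 // ler1n (@card_gt0_sumr_neq0 _ _ p) // p1 oner_neq0.
lra.
Qed.
End Sums.
End XLnX.

Section PsdMatrices.
Variable R : realType.
Local Notation C := R[i].
Local Open Scope sesquilinear_scope.

Definition qform d (A : 'M[C]_d) (u v : 'cV[C]_d) : C := (u ^t* *m A *m v) 0 0.

Lemma qform_delta d (A : 'M[C]_d) i j : qform A (delta_mx i 0) (delta_mx j 0) = A i j.
Proof.
rewrite /qform; have -> : (delta_mx i 0 : 'cV[C]_d) ^t* = delta_mx 0 i.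
  by apply/matrixP => a b; rewrite !mxE; case: eqP; case: eqP; rewrite ?conjC1 ?conjC0.
by rewrite -rowE -colE !mxE.
Qed.

Lemma qformDZ d (A : 'M[C]_d) u v (c : C) :
  qform A (u + c *: v) (u + c *: v) =
  qform A u u + c * qform A u v + c^* * qform A v u + c^* * c * qform A v v.
Proof.
rewrite /qform; have -> : (u + c *: v)^t* = u^t* + c^* *: v^t*.
  by apply/matrixP => a b; rewrite !mxE rmorphD rmorphM.
rewrite !mulmxDl !mulmxDr -!scalemxAl -!scalemxAr.
move: (u^t* *m A *m u) (u^t* *m A *m v) (v^t* *m A *m u) (v^t* *m A *m v) => uu uv vu vv.
by rewrite !mxE; ring.
Qed.

Lemma conjC_eq_of_real (x y : C) :
  x + y \is Num.real -> 'i * (x - y) \is Num.real -> y^* = x.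
Proof.
rewrite !CrealE rmorphM /= conjCi => /eqP xy_real /eqP ixy_real.
have xy_imag : (x - y)^* = - (x - y).
  by apply: (mulfI (@neq0Ci C)); rewrite mulrN -ixy_real mulNr opprK.
have two_neq0 : (2%:R : C) != 0 by rewrite pnatr_eq0.
apply: (mulfI two_neq0).
have -> : 2%:R * y^* = (x + y)^* - (x - y)^* by rewrite rmorphD rmorphB /=; ring.
by rewrite xy_real xy_imag; ring.
Qed.

(* Polarization: the quadratic form is real at [e_i + e_j] and at [e_i + 'i e_j]. *)
Lemma psdmx_herm d (A : 'M[C]_d) : psdmx A -> A ^t* = A.
Proof.
move=> A_psd; apply/matrixP => i j; rewrite !mxE.
have qform_real v : qform A v v \is Num.real by apply: ger0_real; exact: A_psd.
have diag_real k : A k k \is Num.real by rewrite -qform_delta.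
apply: conjC_eq_of_real.
- have -> : A i j + A j i = qform A (delta_mx i 0 + 1 *: delta_mx j 0)
      (delta_mx i 0 + 1 *: delta_mx j 0) - A i i - A j j.
    by rewrite qformDZ !qform_delta conjC1; ring.
  by rewrite !rpredB.
- have -> : 'i * (A i j - A j i) = qform A (delta_mx i 0 + 'i *: delta_mx j 0)
      (delta_mx i 0 + 'i *: delta_mx j 0) - A i i - A j j.
    have ii : - 'i * 'i = 1 :> C by rewrite mulNr -expr2 sqrCi opprK.
    by rewrite qformDZ !qform_delta conjCi ii; ring.
  by rewrite !rpredB.
Qed.

Lemma psdmx_castmx m n (e : m = n) (M : 'M[C]_m) :
  psdmx (castmx (e, e) M) <-> psdmx M.
Proof. by case: n / e; rewrite castmx_id. Qed.

Lemma psdmx_tr_ge0 d (A : 'M[C]_d) : psdmx A -> 0 <= \tr A.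
Proof. by move=> A_psd; apply: sumr_ge0 => i _; rewrite -qform_delta; exact: A_psd. Qed.

Section DiagConj.
Variables (d : nat) (U : 'M[C]_d).
Hypothesis U_unitary : U \is unitarymx.
Implicit Types w : 'rV[C]_d.

Let UUt : U *m U^t* = 1%:M. Proof. exact/unitarymxP. Qed.
Let UtU : U^t* *m U = 1%:M.
Proof. by rewrite -invmx_unitary // mulVmx // unitarymx_unit. Qed.

Definition diag_conj (w : 'rV[C]_d) := U^t* *m diag_mx w *m U.

Lemma diag_conjB w1 w2 : diag_conj (w1 - w2) = diag_conj w1 - diag_conj w2.
Proof. by rewrite /diag_conj linearB /= mulmxBr mulmxBl. Qed.

Lemma diag_conjM w1 w2 :
  diag_conj w1 *m diag_conj w2 = diag_conj (\row_j (w1 0 j * w2 0 j)).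
Proof.
rewrite /diag_conj !mulmxA -[_ *m U *m U^t*]mulmxA UUt mulmx1.
by rewrite -[_ *m diag_mx w1 *m diag_mx w2]mulmxA mulmx_diag.
Qed.

Lemma mxtrace_diag_conj w : \tr (diag_conj w) = \sum_j w 0 j.
Proof. by rewrite /diag_conj mxtrace_mulC mulmxA UUt mul1mx mxtrace_diag. Qed.

Lemma diag_conj_psd w : (forall j, 0 <= w 0 j) -> psdmx (diag_conj w).
Proof.
move=> w_ge0 v; rewrite /diag_conj.
have -> : v^t* *m (U^t* *m diag_mx w *m U) *m v = (U *m v)^t* *m diag_mx w *m (U *m v).
  by rewrite trmx_mul map_mxM !mulmxA.
rewrite mul_mx_diag !mxE; apply: sumr_ge0 => k _; rewrite !mxE mulrC mulrA.
by rewrite mulr_ge0 // mul_conjC_ge0.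
Qed.

Lemma qform_diag_conj w i :
  qform (diag_conj w) (U^t* *m delta_mx i 0) (U^t* *m delta_mx i 0) = w 0 i.
Proof.
rewrite /qform /diag_conj trmx_mul map_mxM trmxCK !mulmxA.
rewrite -[_ *m U *m U^t*]mulmxA UUt mulmx1 -[_ *m U *m U^t*]mulmxA UUt mulmx1.
by rewrite -[LHS]/(qform (diag_mx w) _ _) qform_delta mxE eqxx mulr1n.
Qed.

Lemma char_poly_diag_conj w : char_poly (diag_conj w) = \prod_i ('X - (w 0 i)%:P).
Proof.
rewrite /char_poly /char_poly_mx /diag_conj !map_mxM.
set V := (U^t*) ^ polyC; set W := U ^ polyC.
have VW : V *m W = 1%:M by rewrite -map_mxM UtU map_mx1.
have -> : 'X%:M = V *m 'X%:M *m W :> 'M[{poly C}]_d.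
  by rewrite mul_mx_scalar -scalemxAl VW scalemx1.
rewrite -mulmxBl -mulmxBr !det_mulmx mulrC mulrA -det_mulmx -map_mxM UUt map_mx1.
rewrite det1 mul1r; have := char_poly_trig (diag_mx_is_trig w).
by rewrite /char_poly /char_poly_mx => ->; apply: eq_bigr => i _; rewrite mxE eqxx mulr1n.
Qed.

End DiagConj.

Lemma hermitian_diag_conj d (D : 'M[C]_d) : D^t* = D ->
  exists U s, [/\ U \is unitarymx, D = diag_conj U s & forall i, s 0 i \is Num.real].
Proof.
move=> D_herm; have D_hermsym : D \is hermsymmx.
  by rewrite is_hermitianmxE expr0 scale1r D_herm.
exists (spectralmx D), (spectral_diag D); split.
- exact: spectral_unitarymx.
- rewrite /diag_conj -invmx_unitary ?spectral_unitarymx //.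
  by apply/orthomx_spectralP/hermitian_normalmx.
- by move=> i; have /mxOverP := hermitian_spectral_diag_real D_hermsym; exact.
Qed.

(* [S] is unitarily diagonal with eigenvalues [e >= 0], and comparing the characteristic
   polynomials of [S *m S] shows that the [e ^+ 2] are a permutation of the [s ^+ 2]. *)
Lemma psd_sqrt_trace d (U : 'M[C]_d) (s : 'rV[C]_d) (S : 'M[C]_d) :
  U \is unitarymx -> (forall i, s 0 i \is Num.real) ->
  psdmx S -> S *m S = diag_conj U s *m diag_conj U s -> \tr S = \sum_i `|s 0 i|.
Proof.
move=> U_unitary s_real S_psd SS.
have [V [e [V_unitary S_eq _]]] := hermitian_diag_conj (psdmx_herm S_psd).
rewrite {}S_eq in S_psd SS *.
have e_ge0 i : 0 <= e 0 i.
  by rewrite -(qform_diag_conj V_unitary e i); exact: S_psd.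
have e2s2 : perm_eq [seq e 0 i ^+ 2 | i <- index_enum 'I_d]
                    [seq s 0 i ^+ 2 | i <- index_enum 'I_d].
  apply: prod_XsubC_eq; rewrite !big_map.
  have := congr1 char_poly SS; rewrite !diag_conjM // !char_poly_diag_conj //.
  by under eq_bigr => i _ do rewrite mxE -expr2; under [RHS]eq_bigr => i _ do rewrite mxE -expr2.
rewrite mxtrace_diag_conj //.
transitivity (\sum_(x <- [seq e 0 i ^+ 2 | i <- index_enum 'I_d]) sqrtC x).
  by rewrite big_map; apply: eq_bigr => i _; rewrite sqrCK.
by rewrite (perm_big _ e2s2) big_map; apply: eq_bigr => i _; rewrite -real_normK // sqrCK.
Qed.

Lemma hermitian_jordan_decomposition d (D : 'M[C]_d) : D^t* = D ->
  exists P M : 'M[C]_d, [/\ psdmx P, psdmx M, D = P - M &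
     complex.Re (\tr P) + complex.Re (\tr M) = 2 * trace_dist D].
Proof.
move=> D_herm; have [U [s [U_unitary D_eq s_real]]] := hermitian_diag_conj D_herm.
(* Whichever psd square root [mxsqrt] picks, its trace is [sum |s_i|]. *)
set S := mxsqrt (D^t* *m D).
have [S_psd SS] : psdmx S /\ S *m S = D^t* *m D.
  apply: (@xgetPex _ 0 [set Q : 'M[C]_d | psdmx Q /\ Q *m Q = D^t* *m D]).
  exists (diag_conj U (\row_i `|s 0 i|)); split.
    by apply: diag_conj_psd => // i; rewrite mxE normr_ge0.
  rewrite D_herm D_eq !(diag_conjM U_unitary); congr diag_conj; apply/rowP => i.
  by rewrite !mxE -!expr2 real_normK.
have trS : \tr S = \sum_i `|s 0 i|.
  by apply: (psd_sqrt_trace U_unitary s_real S_psd); rewrite SS D_herm D_eq.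
have two_neq0 : (2%:R : C) != 0 by rewrite pnatr_eq0.
exists (diag_conj U (\row_i ((`|s 0 i| + s 0 i) / 2%:R))),
       (diag_conj U (\row_i ((`|s 0 i| - s 0 i) / 2%:R))); split.
- apply: diag_conj_psd => // i; rewrite mxE divr_ge0 ?ler0n // addrC -lerBlDr sub0r.
  by rewrite lerNl -normrN; apply: real_ler_norm; rewrite realN.
- apply: diag_conj_psd => // i; rewrite mxE divr_ge0 ?ler0n // subr_ge0.
  exact: real_ler_norm.
- by rewrite -(diag_conjB U) D_eq; congr diag_conj; apply/rowP => i; rewrite !mxE; field.
- rewrite -raddfD /= !mxtrace_diag_conj // -big_split /trace_dist -/S trS /=.
  rewrite (eq_bigr (fun i => `|s 0 i|)) => [|i _]; last by rewrite !mxE; field.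
  by rewrite mulrC divfK // pnatr_eq0.
Qed.

Lemma trace_distN d (D : 'M[C]_d) : trace_dist (- D) = trace_dist D.
Proof.
rewrite /trace_dist; have -> : (- D)^t* = - D^t* by apply/matrixP => i j; rewrite !mxE rmorphN.
by rewrite mulNmx mulmxN opprK.
Qed.

End PsdMatrices.

Section TupleSums.
Variables (V : nmodType) (T : finType).

Lemma big_tuple0 (F : 0.-tuple T -> V) : \sum_(t : 0.-tuple T) F t = F [tuple].
Proof. by rewrite (big_pred1 [tuple]) // => t; rewrite /= [t]tuple0; apply/eqP. Qed.

Lemma big_tuple_cons n (F : n.+1.-tuple T -> V) :
  \sum_(t : n.+1.-tuple T) F t = \sum_(x : T) \sum_(t : n.-tuple T) F [tuple of x :: t].
Proof.
rewrite pair_big /= (reindex (fun p : T * n.-tuple T => [tuple of p.1 :: p.2])) //.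
exists (fun t : n.+1.-tuple T => (thead t, behead_tuple t)) => [[x t] _ | t _] /=.
  by congr pair; apply: val_inj.
by rewrite [t in RHS]tuple_eta; apply: val_inj.
Qed.

Lemma big_tuple_cat k m (F : (k + m).-tuple T -> V) :
  \sum_(t : (k + m).-tuple T) F t =
  \sum_(u : k.-tuple T) \sum_(v : m.-tuple T) F [tuple of u ++ v].
Proof.
rewrite pair_big /= (reindex (fun p : k.-tuple T * m.-tuple T => [tuple of p.1 ++ p.2])) //.
have take_k : minn k (k + m) = k by apply/minn_idPl; rewrite leq_addr.
have drop_k : (k + m - k = m)%N by rewrite addKn.
exists (fun t : (k + m).-tuple T =>
  (tcast take_k [tuple of take k t], tcast drop_k [tuple of drop k t])).
  move=> [u v] _ /=; congr pair; apply: val_inj; rewrite [val _]val_tcast /=.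
    by rewrite take_size_cat ?size_tuple.
  by rewrite drop_size_cat ?size_tuple.
by move=> t _; apply: val_inj; rewrite /= !val_tcast /= cat_take_drop.
Qed.

End TupleSums.

Section Channel.
Variables (R : realType) (X Y : finType) (d : nat).
Local Notation C := R[i].
Variable N : X -> Y -> 'M[C]_d -> 'M[C]_d.
Hypothesis N_ccqsc : ccqsc N.

Lemma channelD x y A B : N x y (A + B) = N x y A + N x y B.
Proof. by have := (N_ccqsc.1 x y).1 1 A B; rewrite !scale1r. Qed.

Lemma channel0 x y : N x y 0 = 0.
Proof. by apply: (addrI (N x y 0)); rewrite addr0 -channelD addr0. Qed.

Lemma channelB x y A B : N x y (A - B) = N x y A - N x y B.
Proof.
have := (N_ccqsc.1 x y).1 (-1) B A; rewrite !scaleN1r => linNB.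
by rewrite addrC linNB addrC.
Qed.

Lemma channel_psd x y A : psdmx A -> psdmx (N x y A).
Proof.
rewrite {1}(mxEmxblock A) => /psdmx_castmx /((N_ccqsc.1 x y).2 1 (fun _ _ => A)).
by rewrite {2}(mxEmxblock (N x y A)) => /psdmx_castmx.
Qed.

Section Evolve.
Variables (n : nat) (xs : n.-tuple X) (ys : n.-tuple Y).

Lemma evolveD A B : evolve N xs ys (A + B) = evolve N xs ys A + evolve N xs ys B.
Proof. by rewrite /evolve; elim: (zip xs ys) A B => //= p l IH A B; rewrite channelD IH. Qed.

Lemma evolve0 : evolve N xs ys 0 = 0.
Proof. by rewrite /evolve; elim: (zip xs ys) => //= p l; rewrite channel0. Qed.

Lemma evolveB A B : evolve N xs ys (A - B) = evolve N xs ys A - evolve N xs ys B.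
Proof. by rewrite /evolve; elim: (zip xs ys) A B => //= p l IH A B; rewrite channelB IH. Qed.

Lemma evolve_sum (I : finType) (F : I -> 'M[C]_d) :
  evolve N xs ys (\sum_i F i) = \sum_i evolve N xs ys (F i).
Proof. exact: (big_morph _ evolveD evolve0). Qed.

Lemma evolve_psd A : psdmx A -> psdmx (evolve N xs ys A).
Proof.
rewrite /evolve; elim: (zip xs ys) A => [|p l IH] A A_psd; first exact: A_psd.
exact: (IH _ (channel_psd p.1 p.2 A_psd)).
Qed.

End Evolve.

Lemma evolve_cat k m (u : k.-tuple X) (v : m.-tuple X)
    (s : k.-tuple Y) (t : m.-tuple Y) A :
  evolve N [tuple of u ++ v] [tuple of s ++ t] A = evolve N v t (evolve N u s A).
Proof. by rewrite /evolve /= zip_cat ?size_tuple // foldl_cat. Qed.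

Lemma state_psd n (xs : n.-tuple X) A : psdmx A -> psdmx (state_n N xs A).
Proof.
move=> A_psd; apply: (big_ind (@psdmx R d)) => [v|B1 B2 B1_psd B2_psd v|ys _].
- by rewrite mulmx0 mul0mx mxE.
- by rewrite mulmxDr mulmxDl mxE addr_ge0.
- exact: evolve_psd.
Qed.

Lemma state_cons n x (xs : n.-tuple X) A :
  state_n N [tuple of x :: xs] A = state_n N xs (\sum_y N x y A).
Proof.
rewrite /state_n big_tuple_cons exchange_big /=.
by apply: eq_bigr => ys _; rewrite evolve_sum.
Qed.

Lemma mxtrace_state n (xs : n.-tuple X) A : \tr (state_n N xs A) = \tr A.
Proof.
elim: n xs A => [|n IH] xs A; first by rewrite /state_n big_tuple0 tuple0.
by case/tupleP: xs => x xs; rewrite state_cons IH N_ccqsc.2.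
Qed.

Lemma state_density n (xs : n.-tuple X) rho : density rho -> density (state_n N xs rho).
Proof. by case=> rho_psd rho_tr; split; [exact: state_psd | rewrite mxtrace_state]. Qed.

End Channel.

Section Weighted.
Variable R : realType.

Lemma sum_weighted_le (I : finType) (w F : I -> R) c :
  (forall i, 0 <= w i) -> \sum_i w i = 1 -> (forall i, F i <= c) ->
  \sum_i w i * F i <= c.
Proof.
move=> w_ge0 w1 F_le; rewrite -[c]mul1r -w1 mulr_suml.
by apply: ler_sum => i _; rewrite ler_wpM2l.
Qed.

Lemma sum_weighted_sandwich (I : finType) (w F G : I -> R) c :
  (forall i, 0 <= w i) -> \sum_i w i = 1 -> (forall i, F i - c <= G i <= F i) ->
  \sum_i w i * F i - c <= \sum_i w i * G i <= \sum_i w i * F i.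
Proof.
move=> w_ge0 w1 FG; apply/andP; split; last first.
  by apply: ler_sum => i _; rewrite ler_wpM2l //; case/andP: (FG i).
rewrite -[c]mul1r -w1 mulr_suml -sumrB; apply: ler_sum => i _.
by rewrite -mulrBr ler_wpM2l //; case/andP: (FG i).
Qed.

Lemma tv_mixture_le (I T : finType) (w : I -> R) (f g : I -> T -> R) c :
  (forall i, 0 <= w i) -> \sum_i w i = 1 ->
  (forall i, \sum_t `|f i t - g i t| <= c) ->
  \sum_t `|\sum_i w i * f i t - \sum_i w i * g i t| <= c.
Proof.
move=> w_ge0 w1 fg; apply: le_trans (sum_weighted_le w_ge0 w1 fg).
under [in leRHS]eq_bigr => i _ do rewrite mulr_sumr.
rewrite exchange_big; apply: ler_sum => t _ /=; rewrite -sumrB.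
apply: le_trans (ler_norm_sum _ _ _) _; apply: ler_sum => i _.
by rewrite -mulrBr normrM ger0_norm.
Qed.

End Weighted.

Section ClassicalInformation.
Variable R : realType.

Lemma mutual_info_channel (A B : finType) (q : A -> R) (w : A -> B -> R) :
  (forall a, 0 <= q a) -> (forall a b, 0 <= w a b) -> (forall a, \sum_b w a b = 1) ->
  mutual_info (fun a b => q a * w a b) =
  \sum_a q a * \sum_b xlnx (w a b) - \sum_b xlnx (\sum_a q a * w a b).
Proof.
move=> q_ge0 w_ge0 w1; rewrite /mutual_info.
have termwise a b : (if q a * w a b == 0 then 0 else q a * w a b *
    ln (q a * w a b / ((\sum_b' q a * w a b') * (\sum_a' q a' * w a' b)))) =
    q a * xlnx (w a b) - q a * w a b * ln (\sum_a' q a' * w a' b).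
  rewrite -mulr_sumr w1 mulr1; have [qw0|qw_neq0] := eqVneq (q a * w a b) 0.
    by rewrite /xlnx mulrA qw0 !mul0r subrr.
  have qa_gt0 : 0 < q a.
    by rewrite lt_def q_ge0 andbT; apply: contraNneq qw_neq0 => ->; rewrite mul0r.
  have wab_gt0 : 0 < w a b.
    by rewrite lt_def w_ge0 andbT; apply: contraNneq qw_neq0 => ->; rewrite mulr0.
  have pb_gt0 : 0 < \sum_a' q a' * w a' b.
    rewrite (bigD1 a) //= ltr_pwDl ?mulr_gt0 //.
    by apply: sumr_ge0 => i _; apply: mulr_ge0.
  have -> : q a * w a b / (q a * \sum_a' q a' * w a' b) =
            w a b / \sum_a' q a' * w a' b.
    by field; rewrite !gt_eqF.
  by rewrite ln_div ?posrE // /xlnx; ring.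
under eq_bigr => a _ do under eq_bigr => b _ do rewrite termwise.
under eq_bigr => a _ do rewrite sumrB -mulr_sumr.
rewrite sumrB exchange_big /=; congr (_ - _); apply: eq_bigr => b _.
by rewrite /xlnx mulr_suml.
Qed.

Lemma xlnx_marginal_bounds (S T : finType) (a : S -> T -> R) :
  (forall s t, 0 <= a s t) -> \sum_s \sum_t a s t = 1 ->
  \sum_t xlnx (\sum_s a s t) - ln #|S|%:R <= \sum_s \sum_t xlnx (a s t)
    <= \sum_t xlnx (\sum_s a s t).
Proof.
move=> a_ge0 a1; rewrite exchange_big /=; apply/andP; split.
  rewrite exchange_big /= in a1.
  rewrite -[ln _]mul1r -{1}a1 mulr_suml -sumrB.
  by apply: ler_sum => t _; exact: sum_xlnx_ge.
by apply: ler_sum => t _; exact: sum_xlnx_le.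
Qed.

Lemma ln_card_tuple (T : finType) k :
  (0 < #|{: k.-tuple T}|)%N -> ln (#|{: k.-tuple T}|%:R : R) = k%:R * ln #|T|%:R.
Proof.
rewrite card_tuple; case: k => [|k]; first by rewrite expn0 ln1 mul0r.
by rewrite expn_gt0 orbF => T_gt0; rewrite natrX lnXn ?ltr0n // mulr_natl.
Qed.

End ClassicalInformation.

Section MutualInformation.
Variables (R : realType) (X Y : finType) (d : nat).
Local Notation C := R[i].
Variables (N : X -> Y -> 'M[C]_d -> 'M[C]_d) (Q : X -> R).
Hypotheses (N_ccqsc : ccqsc N) (Q_pmf : pmf Q).
Local Notation lnY := (ln (#|Y|%:R : R)).
Local Open Scope sesquilinear_scope.

Definition Qprod n (xs : n.-tuple X) : R := \prod_(l < n) Q (tnth xs l).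

Lemma Qprod_ge0 n (xs : n.-tuple X) : 0 <= Qprod xs.
Proof. by apply: prodr_ge0 => l _; exact: Q_pmf.1. Qed.

Lemma Qprod_cons n x (xs : n.-tuple X) : Qprod [tuple of x :: xs] = Q x * Qprod xs.
Proof.
by rewrite /Qprod big_ord_recl; congr (_ * _); apply: eq_bigr => l _; rewrite !(tnth_nth x).
Qed.

Lemma Qprod_cat k m (u : k.-tuple X) (v : m.-tuple X) :
  Qprod [tuple of u ++ v] = Qprod u * Qprod v.
Proof.
rewrite /Qprod big_split_ord; congr (_ * _); apply: eq_bigr => l _.
  by rewrite tnth_lshift.
by rewrite tnth_rshift.
Qed.

Lemma Qprod_sum n : \sum_(xs : n.-tuple X) Qprod xs = 1.
Proof.
elim: n => [|n IH]; first by rewrite big_tuple0 /Qprod big_ord0.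
rewrite big_tuple_cons -Q_pmf.2; apply: eq_bigr => x _.
by under eq_bigr => xs _ do rewrite Qprod_cons; rewrite -mulr_sumr IH mulr1.
Qed.

Lemma Qprod_pair_sum k m :
  \sum_(p : k.-tuple X * m.-tuple X) Qprod p.1 * Qprod p.2 = 1.
Proof.
transitivity (\sum_(u : k.-tuple X) \sum_(v : m.-tuple X) Qprod u * Qprod v).
  by rewrite pair_big.
by under eq_bigr => u _ do rewrite -mulr_sumr Qprod_sum mulr1; exact: Qprod_sum.
Qed.

Definition out_prob n (xs : n.-tuple X) (ys : n.-tuple Y) (A : 'M[C]_d) : R :=
  complex.Re (\tr (evolve N xs ys A)).

Lemma out_prob_ge0 n (xs : n.-tuple X) ys A : psdmx A -> 0 <= out_prob xs ys A.
Proof.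
move=> /(evolve_psd N_ccqsc xs ys)/psdmx_tr_ge0.
by rewrite lecE => /andP[].
Qed.

Lemma out_prob_sum n (xs : n.-tuple X) A : \sum_ys out_prob xs ys A = complex.Re (\tr A).
Proof. by rewrite /out_prob -raddf_sum -raddf_sum -(mxtrace_state N_ccqsc xs A). Qed.

Lemma density_out_prob_sum n (xs : n.-tuple X) sigma :
  density sigma -> \sum_ys out_prob xs ys sigma = 1.
Proof. by case=> _ tr1; rewrite out_prob_sum tr1. Qed.

Lemma out_probB n (xs : n.-tuple X) ys A B :
  out_prob xs ys (A - B) = out_prob xs ys A - out_prob xs ys B.
Proof. by rewrite /out_prob evolveB // !raddfB. Qed.

Lemma out_prob_cat k m (u : k.-tuple X) (v : m.-tuple X)
    (s : k.-tuple Y) (t : m.-tuple Y) A :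
  out_prob [tuple of u ++ v] [tuple of s ++ t] A = out_prob v t (evolve N u s A).
Proof. by rewrite /out_prob evolve_cat. Qed.

Lemma out_prob_state k m (u : k.-tuple X) (v : m.-tuple X) t A :
  \sum_(s : k.-tuple Y) out_prob v t (evolve N u s A) = out_prob v t (state_n N u A).
Proof. by rewrite /out_prob /state_n (evolve_sum N_ccqsc) -!raddf_sum. Qed.

Lemma out_prob_tv n (xs : n.-tuple X) A B eps :
  psdmx A -> psdmx B -> trace_dist (A - B) < eps ->
  \sum_ys `|out_prob xs ys A - out_prob xs ys B| <= eps *+ 2.
Proof.
move=> A_psd B_psd AB_eps.
have AB_herm : (A - B)^t* = A - B.
  have -> : (A - B)^t* = A^t* - B^t* by apply/matrixP => i j; rewrite !mxE rmorphB.
  by rewrite (psdmx_herm A_psd) (psdmx_herm B_psd).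
have [P [M [P_psd M_psd AB_PM trPM]]] := hermitian_jordan_decomposition AB_herm.
apply: (@le_trans _ _ (\sum_ys (out_prob xs ys P + out_prob xs ys M))).
  apply: ler_sum => ys _; rewrite -out_probB AB_PM out_probB.
  apply: le_trans (ler_normB _ _) _.
  by rewrite !ger0_norm ?out_prob_ge0.
by rewrite big_split /= !out_prob_sum trPM mulr2n; lra.
Qed.

(* For [m] uses of the channel from state [sigma] with i.i.d. [Q] inputs,
   [cond_negent m sigma = - H(Y^m | X^m)] and [out_dist sigma] is the law of [Y^m]. *)
Definition cond_negent m (sigma : 'M[C]_d) : R :=
  \sum_(v : m.-tuple X) Qprod v * \sum_(t : m.-tuple Y) xlnx (out_prob v t sigma).

Definition out_dist m (sigma : 'M[C]_d) (t : m.-tuple Y) : R :=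
  \sum_(v : m.-tuple X) Qprod v * out_prob v t sigma.

Lemma mutual_info_joint_pmf n rho : density rho ->
  mutual_info (@joint_pmf R X Y d N Q rho n) =
  cond_negent n rho - \sum_(t : n.-tuple Y) xlnx (out_dist rho t).
Proof.
move=> rho_density; apply: mutual_info_channel => [xs|xs ys|xs].
- exact: Qprod_ge0.
- by apply: out_prob_ge0; case: rho_density.
- exact: density_out_prob_sum.
Qed.

Lemma out_dist_ge0 m sigma (t : m.-tuple Y) : psdmx sigma -> 0 <= out_dist sigma t.
Proof. by move=> sigma_psd; apply: sumr_ge0 => v _; rewrite mulr_ge0 ?Qprod_ge0 ?out_prob_ge0. Qed.

Lemma out_dist_sum m sigma : density sigma -> \sum_(t : m.-tuple Y) out_dist sigma t = 1.
Proof.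
move=> sigma_density; rewrite exchange_big /= -[RHS](Qprod_sum m).
by apply: eq_bigr => v _; rewrite -mulr_sumr density_out_prob_sum // mulr1.
Qed.

Lemma out_dist_tv m sigma1 sigma2 eps :
  psdmx sigma1 -> psdmx sigma2 -> trace_dist (sigma1 - sigma2) < eps ->
  \sum_(t : m.-tuple Y) `|out_dist sigma1 t - out_dist sigma2 t| <= eps *+ 2.
Proof.
move=> psd1 psd2 td_eps; apply: tv_mixture_le (Qprod_sum m) _ => [v|v].
  exact: Qprod_ge0.
exact: out_prob_tv.
Qed.

Lemma cond_negent_diff_le m sigma1 sigma2 eps :
  density sigma1 -> density sigma2 -> trace_dist (sigma1 - sigma2) < eps ->
  cond_negent m sigma2 - cond_negent m sigma1 <= 2 + eps * (m%:R * lnY).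
Proof.
move=> dens1 dens2 td_eps; rewrite /cond_negent -sumrB.
under eq_bigr => v _ do rewrite -mulrBr.
apply: sum_weighted_le (Qprod_sum m) _ => [v|v]; first exact: Qprod_ge0.
have sum1 := density_out_prob_sum v dens1.
rewrite -ln_card_tuple; last first.
  by rewrite (card_gt0_sumr_neq0 (F := out_prob v ^~ sigma1)) // sum1 oner_neq0.
apply: sum_xlnx_diff_le => [t|t|||].
- by apply: out_prob_ge0; case: dens1.
- by apply: out_prob_ge0; case: dens2.
- exact: sum1.
- exact: density_out_prob_sum.
- by apply: out_prob_tv => //; [case: dens1 | case: dens2].
Qed.

Section Split.
Variables k m : nat.

Definition avg_cond_negent rho :=
  \sum_(u : k.-tuple X) Qprod u * cond_negent m (state_n N u rho).

Definition mix_out_dist rho (t : m.-tuple Y) :=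
  \sum_(u : k.-tuple X) Qprod u * out_dist (state_n N u rho) t.

Lemma evolve_marginal_bounds (u : k.-tuple X) (v : m.-tuple X) rho : density rho ->
  \sum_t xlnx (out_prob v t (state_n N u rho)) - k%:R * lnY
    <= \sum_(s : k.-tuple Y) \sum_(t : m.-tuple Y) xlnx (out_prob v t (evolve N u s rho))
    <= \sum_t xlnx (out_prob v t (state_n N u rho)).
Proof.
move=> rho_density; have [rho_psd _] := rho_density.
pose a s t := out_prob v t (evolve N u s rho).
have a_ge0 s t : 0 <= a s t by apply/out_prob_ge0/evolve_psd.
have a_marginal t : \sum_s a s t = out_prob v t (state_n N u rho) by exact: out_prob_state.
have a1 : \sum_s \sum_t a s t = 1.
  rewrite exchange_big /=; under eq_bigr => t _ do rewrite a_marginal.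
  exact/density_out_prob_sum/state_density.
have := xlnx_marginal_bounds a_ge0 a1.
rewrite ln_card_tuple ?(card_gt0_sumr_neq0 (F := fun s => \sum_t a s t)) ?a1 ?oner_neq0 //.
by under eq_bigr => t _ do rewrite a_marginal.
Qed.

Lemma cond_negent_split rho : density rho ->
  avg_cond_negent rho - k%:R * lnY <= cond_negent (k + m) rho <= avg_cond_negent rho.
Proof.
move=> rho_density.
have -> : cond_negent (k + m) rho =
    \sum_(p : k.-tuple X * m.-tuple X) Qprod p.1 * Qprod p.2 *
      \sum_(s : k.-tuple Y) \sum_(t : m.-tuple Y) xlnx (out_prob p.2 t (evolve N p.1 s rho)).
  rewrite /cond_negent big_tuple_cat pair_big; apply: eq_bigr => -[u v] _ /=.
  rewrite Qprod_cat big_tuple_cat; congr (_ * _).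
  by apply: eq_bigr => s _; apply: eq_bigr => t _; rewrite out_prob_cat.
have -> : avg_cond_negent rho =
    \sum_(p : k.-tuple X * m.-tuple X) Qprod p.1 * Qprod p.2 *
      \sum_t xlnx (out_prob p.2 t (state_n N p.1 rho)).
  rewrite /avg_cond_negent /cond_negent; under eq_bigr => u _ do rewrite mulr_sumr.
  by rewrite pair_big; apply: eq_bigr => p _; rewrite mulrA.
apply: sum_weighted_sandwich (Qprod_pair_sum k m) _ => [p|p].
  by rewrite mulr_ge0 ?Qprod_ge0.
exact: evolve_marginal_bounds.
Qed.

Lemma out_dist_marginal rho (t : m.-tuple Y) :
  \sum_(s : k.-tuple Y) out_dist rho [tuple of s ++ t] = mix_out_dist rho t.
Proof.
rewrite /mix_out_dist /out_dist exchange_big big_tuple_cat; apply: eq_bigr => u _ /=.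
rewrite mulr_sumr; apply: eq_bigr => v _; rewrite mulrA -out_prob_state mulr_sumr.
by apply: eq_bigr => s _; rewrite Qprod_cat out_prob_cat.
Qed.

Lemma out_negent_split rho : density rho ->
  \sum_t xlnx (mix_out_dist rho t) - k%:R * lnY
    <= \sum_(y : (k + m).-tuple Y) xlnx (out_dist rho y)
    <= \sum_t xlnx (mix_out_dist rho t).
Proof.
move=> rho_density; have [rho_psd _] := rho_density.
pose b (s : k.-tuple Y) (t : m.-tuple Y) := out_dist rho [tuple of s ++ t].
have b_ge0 s t : 0 <= b s t by exact: out_dist_ge0.
have b1 : \sum_s \sum_t b s t = 1 by rewrite -big_tuple_cat out_dist_sum.
have := xlnx_marginal_bounds b_ge0 b1.
rewrite ln_card_tuple ?(card_gt0_sumr_neq0 (F := fun s => \sum_t b s t)) ?b1 ?oner_neq0 //.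
by rewrite big_tuple_cat; under eq_bigr => t _ do rewrite out_dist_marginal.
Qed.

Section Continuity.
Variables (alpha beta : 'M[C]_d) (eps : R).
Hypotheses (alpha_density : density alpha) (beta_density : density beta).
Hypothesis states_close :
  forall u : k.-tuple X, trace_dist (state_n N u alpha - state_n N u beta) < eps.

Lemma avg_cond_negent_diff_le :
  avg_cond_negent beta - avg_cond_negent alpha <= 2 + eps * (m%:R * lnY).
Proof.
rewrite -sumrB; under eq_bigr => u _ do rewrite -mulrBr.
apply: sum_weighted_le (Qprod_sum k) _ => [u|u]; first exact: Qprod_ge0.
by apply: cond_negent_diff_le (states_close u); exact: state_density.
Qed.

Lemma mix_out_dist_ge0 rho t : density rho -> 0 <= mix_out_dist rho t.
Proof.
move=> rho_density; apply: sumr_ge0 => u _; rewrite mulr_ge0 ?Qprod_ge0 //.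
by apply: out_dist_ge0; case: (state_density N_ccqsc u rho_density).
Qed.

Lemma mix_out_dist_sum rho : density rho -> \sum_t mix_out_dist rho t = 1.
Proof.
move=> rho_density; rewrite exchange_big /= -[RHS](Qprod_sum k).
apply: eq_bigr => u _; rewrite -mulr_sumr out_dist_sum ?mulr1 //.
exact: state_density.
Qed.

Lemma mix_out_negent_diff_le :
  \sum_t xlnx (mix_out_dist beta t) - \sum_t xlnx (mix_out_dist alpha t)
    <= 2 + eps * (m%:R * lnY).
Proof.
have sum1 := mix_out_dist_sum alpha_density.
rewrite -ln_card_tuple; last first.
  by rewrite (card_gt0_sumr_neq0 (F := mix_out_dist alpha)) // sum1 oner_neq0.
apply: sum_xlnx_diff_le => [t|t|||]; rewrite ?mix_out_dist_ge0 ?mix_out_dist_sum //.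
apply: tv_mixture_le (Qprod_sum k) _ => [u|u]; first exact: Qprod_ge0.
have [[psd_a _] [psd_b _]] := (state_density N_ccqsc u alpha_density,
                               state_density N_ccqsc u beta_density).
exact: out_dist_tv.
Qed.

End Continuity.

Lemma mutual_info_diff_le alpha beta eps : density alpha -> density beta ->
  (forall u : k.-tuple X, trace_dist (state_n N u alpha - state_n N u beta) < eps) ->
  `|mutual_info (@joint_pmf R X Y d N Q alpha (k + m)) -
    mutual_info (@joint_pmf R X Y d N Q beta (k + m))|
    <= (k%:R * lnY + 2 + eps * (m%:R * lnY)) *+ 2.
Proof.
move=> alpha_density beta_density close.
have close_sym (u : k.-tuple X) : trace_dist (state_n N u beta - state_n N u alpha) < eps.
  by rewrite -opprB trace_distN; exact: close.
have /andP[] := cond_negent_split alpha_density.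
have /andP[] := cond_negent_split beta_density.
have /andP[] := out_negent_split alpha_density.
have /andP[] := out_negent_split beta_density.
have := avg_cond_negent_diff_le alpha_density beta_density close.
have := avg_cond_negent_diff_le beta_density alpha_density close_sym.
have := mix_out_negent_diff_le alpha_density beta_density close.
have := mix_out_negent_diff_le beta_density alpha_density close_sym.
rewrite !mutual_info_joint_pmf // ler_norml mulr2n.
by move=> *; apply/andP; split; lra.
Qed.

End Split.

Lemma ln_card_ge0 (rho : 'M[C]_d) : density rho -> 0 <= lnY.
Proof.
move=> rho_density; rewrite ln_ge0 // ler1n -[#|Y|]expn1 -card_tuple.
by rewrite (card_gt0_sumr_neq0 (F := @out_dist 1 rho)) // out_dist_sum // oner_neq0.
Qed.

Lemma In_diff_le k m alpha beta eps :
  density alpha -> density beta -> 0 <= eps -> (0 < k + m)%N ->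
  (forall u : k.-tuple X, trace_dist (state_n N u alpha - state_n N u beta) < eps) ->
  `|In N Q alpha (k + m) - In N Q beta (k + m)|
    <= (k%:R * lnY + 2) *+ 2 / (k + m)%:R + eps * lnY *+ 2.
Proof.
move=> alpha_density beta_density eps_ge0 n_gt0 close.
have lnY_ge0 := ln_card_ge0 alpha_density.
have n_pos : 0 < (k + m)%:R :> R by rewrite ltr0n.
have MI_le := mutual_info_diff_le m alpha_density beta_density close.
rewrite /In -mulrBr normrM ger0_norm ?invr_ge0 ?ler0n // mulrC ler_pdivrMr //.
apply: (le_trans MI_le).
have -> : ((k%:R * lnY + 2) *+ 2 / (k + m)%:R + eps * lnY *+ 2) * (k + m)%:R =
    (k%:R * lnY + 2) *+ 2 + eps * lnY * (k + m)%:R *+ 2.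
  by rewrite !mulr2n; field; rewrite -natrD gt_eqF.
have : eps * lnY * m%:R <= eps * lnY * (k + m)%:R.
  by rewrite ler_wpM2l ?mulr_ge0 // ler_nat leq_addl.
rewrite !mulr2n; lra.
Qed.

End MutualInformation.

Lemma cvg0_of_le_div (R : realType) (u : nat -> R) :
  (forall e, 0 < e -> exists c, \forall n \near \oo, `|u n| <= c / n%:R + e) ->
  u @ \oo --> 0.
Proof.
move=> u_le; apply/cvgrPdist_lt => e e_gt0.
have [c c_le] := u_le (e / 2) (divr_gt0 e_gt0 (ltr0Sn _ 1)).
near=> n.
have n_gt0 : (0 < n)%N by near: n; exact: nbhs_infty_gt.
have n_big : c * 2 / e < n%:R by near: n; exact: nbhs_infty_gtr.
have c_n : c / n%:R < e / 2.
  by move: n_big; rewrite !ltr_pdivrMr ?ltr0n //; lra.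
rewrite sub0r normrN; apply: le_lt_trans (_ : c / n%:R + e / 2 < e); last lra.
by near: n.
Unshelve. all: by end_near.
Qed.

Theorem theorem1 (R : realType) (X Y : finType) (d : nat)
  (N : X -> Y -> 'M[R[i]]_d -> 'M[R[i]]_d) (Q : X -> R)
  (alpha beta : 'M[R[i]]_d) :
  ccqsc N -> indecomposable N -> pmf Q ->
  density alpha -> density beta ->
  (fun n : nat => In N Q alpha n - In N Q beta n) @ \oo --> (0 : R).
Proof.
move=> N_ccqsc N_indec Q_pmf alpha_density beta_density.
have lnY_ge0 := ln_card_ge0 N_ccqsc Q_pmf alpha_density.
apply: cvg0_of_le_div => e e_gt0.
pose eps := e / 2 / (ln #|Y|%:R + 1).
have eps_gt0 : 0 < eps by rewrite !divr_gt0 //; lra.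
have eps_small : eps * ln #|Y|%:R <= e / 2.
  rewrite mulrAC ler_pdivrMr; last lra.
  by rewrite ler_wpM2l ?lerDl // divr_ge0 // ltW.
have [k close] := N_indec alpha beta alpha_density beta_density eps eps_gt0.
exists ((k%:R * ln #|Y|%:R + 2) *+ 2); near=> n.
have k_lt_n : (k < n)%N by near: n; exact: nbhs_infty_gt.
rewrite -(subnKC (ltnW k_lt_n)).
have n_gt0 : (0 < k + (n - k))%N by rewrite addn_gt0 subn_gt0 k_lt_n orbT.
apply: (le_trans (In_diff_le N_ccqsc Q_pmf alpha_density beta_density
                   (ltW eps_gt0) n_gt0 (close k (leqnn k)))).
rewrite lerD2l mulr2n; lra.
Unshelve. all: by end_near.
Qed.
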